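(* Consider a quantum data-syndrome code of pure distance $d_p$ on $n$ qubits and $m$ measurement bits, subject to noise described by the channel supports $\Gamma=\{\gamma\subseteq[2n+m]: \mathrm{wt}_P(\gamma)\le t\}$ with channel distributions satisfying $P_\gamma(0)>\tfrac12$ for all $\gamma\in\Gamma$. If $t\le\lfloor\frac{d_p-1}{2}\rfloor$, then the total error distribution $P$ is identifiable from the syndrome statistics, i.e. any other family $(P'_\gamma)_{\gamma\in\Gamma}$ of channel distributions for the same $\Gamma$ with $P'_\gamma(0)>\tfrac12$ whose total error distribution $P'$ induces the same syndrome distribution satisfies $P'=P$.
   Context: Phase space representation: a Pauli operator on $n$ qubits (modulo phases) $X^{x_1}Z^{z_1}\otimes\cdots\otimes X^{x_n}Z^{z_n}$ is identified with $(x_1,\dots,x_n,z_1,\dots,z_n)\in\mathbb F_2^{2n}$. For $v=(x,z)\in\mathbb F_2^{2n}$ write $\overline v=(z,x)$. A quantum data-syndrome code is given by pairwise commuting stabilizer generators $g^{(1)},\dots,g^{(l)}\in\mathbb F_2^{2n}$ (i.e. $\overline{g^{(i)}}\cdot g^{(j)}=0$; the generated stabilizer group does not contain $-I$) and a classical code with generator matrix $G_C=[I_l\ A]\in\mathbb F_2^{l\times m}$; for $i\in[m]$ let $f^{(i)}=\sum_{j=1}^l (G_C)_{j,i}g^{(j)}$. Set $N=2n+m$. Errors are $e=(e_d,e_m)\in\mathbb F_2^{2n}\times\mathbb F_2^m=\mathbb F_2^N$, with syndrome $\mathrm{syn}(e)\in\mathbb F_2^m$, $\mathrm{syn}(e)_i=f^{(i)}\cdot\overline{e_d}+(e_m)_i$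 (mod 2). Vectors in $\mathbb F_2^N$ are identified with their supports in $[N]$. The Pauli weight of $e=(x,z,e_m)$ is $\mathrm{wt}_P(e)=|\{i\in[n]: x_i\ne0 \text{ or } z_i\neq 0\}|+|\{j: (e_m)_j\neq 0\}|$. The pure distance is $d_p=\min\{\mathrm{wt}_P(e): e\in\mathbb F_2^N\setminus\{0\},\ \mathrm{syn}(e)=0\}$. A noise model consists of $\Gamma\subseteq 2^{[N]}$ and for each $\gamma\in\Gamma$ a probability distribution $P_\gamma$ on $\mathbb F_2^N$ supported on vectors with support in $\gamma$; the total error distribution $P$ is the distribution of $\sum_\gamma e_\gamma$ with independent $e_\gamma\sim P_\gamma$. The syndrome statistics is the distribution of $\mathrm{syn}(e)$, $e\sim P$. *)

From HB Require Import structures.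
From mathcomp Require Import all_boot all_order all_algebra.
From mathcomp Require Import reals.
Set Implicit Arguments. Unset Strict Implicit. Unset Printing Implicit Defensive.
Import Order.TTheory GRing.Theory Num.Theory.
Local Open Scope ring_scope.

(* Binary vectors; phase space F_2^{2n} = 'rV['F_2]_(n + n), (x | z). *)
Notation bvec k := 'rV['F_2]_k.

Definition pbar (n : nat) (v : bvec (n + n)) : bvec (n + n) :=
  row_mx (rsubmx v) (lsubmx v).

Definition bdot (k : nat) (u v : bvec k) : 'F_2 := (u *m v^T) 0 0.

(* Classical generator matrix G_C = [I_l A], with m = l + k *)
Definition GC (l k : nat) (A : 'M['F_2]_(l, k)) : 'M['F_2]_(l, l + k) :=
  row_mx 1%:M A.

Definition fvec (n l k : nat) (g : 'I_l -> bvec (n + n)) (A : 'M['F_2]_(l, k))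
  (i : 'I_(l + k)) : bvec (n + n) :=
  \sum_(j < l) GC A j i *: g j.

(* Errors e = (e_d, e_m) in F_2^{2n} x F_2^m = F_2^N, N = 2n + m *)
Definition err_d (n m : nat) (e : bvec (n + n + m)) : bvec (n + n) := lsubmx e.
Definition err_m (n m : nat) (e : bvec (n + n + m)) : bvec m := rsubmx e.

Definition syn (n l k : nat) (g : 'I_l -> bvec (n + n)) (A : 'M['F_2]_(l, k))
  (e : bvec (n + n + (l + k))) : bvec (l + k) :=
  \row_i (bdot (fvec g A i) (pbar (err_d e)) + err_m e 0 i).

Definition wtP (n m : nat) (e : bvec (n + n + m)) : nat :=
  #|[set i : 'I_n | (lsubmx (err_d e) 0 i != 0) || (rsubmx (err_d e) 0 i != 0)]|
  + #|[set j : 'I_m | err_m e 0 j != 0]|.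

Definition vec_of_set (N : nat) (S : {set 'I_N}) : bvec N :=
  \row_i (if i \in S then 1 else 0).
Definition supp (N : nat) (e : bvec N) : {set 'I_N} := [set i | e 0 i != 0].

Definition wtP_set (n m : nat) (S : {set 'I_(n + n + m)}) : nat :=
  wtP (vec_of_set S).

Definition is_pure_distance (n l k : nat) (g : 'I_l -> bvec (n + n))
  (A : 'M['F_2]_(l, k)) (d : nat) : Prop :=
  (exists e : bvec (n + n + (l + k)), e != 0 /\ syn g A e = 0 /\ wtP e = d) /\
  (forall e : bvec (n + n + (l + k)), e != 0 -> syn g A e = 0 -> (d <= wtP e)%N).

Definition is_channel_dist (R : realType) (N : nat) (gam : {set 'I_N})
  (p : {ffun bvec N -> R}) : Prop :=
  (forall e, 0 <= p e) /\ (\sum_e p e = 1) /\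
  (forall e, p e != 0 -> supp e \subset gam).

(* Total error distribution: distribution of sum_{gamma in Gamma} e_gamma with
   independent e_gamma ~ P_gamma (families indexed by gamma, zero off Gamma). *)
Definition total_dist (R : realType) (N : nat) (Gam : {set {set 'I_N}})
  (P : {set 'I_N} -> {ffun bvec N -> R}) (x : bvec N) : R :=
  \sum_(f : {ffun {set 'I_N} -> bvec N} |
          [forall gam, (gam \notin Gam) ==> (f gam == 0)] &&
          (\sum_(gam in Gam) f gam == x))
     \prod_(gam in Gam) P gam (f gam).

Definition syn_dist (R : realType) (n l k : nat) (g : 'I_l -> bvec (n + n))
  (A : 'M['F_2]_(l, k)) (Gam : {set {set 'I_(n + n + (l + k))}})
  (P : {set 'I_(n + n + (l + k))} -> {ffun bvec (n + n + (l + k)) -> R})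
  (s : bvec (l + k)) : R :=
  \sum_(e | syn g A e == s) total_dist Gam P e.

Definition Gamma_t (n m t : nat) : {set {set 'I_(n + n + m)}} :=
  [set gam | (wtP_set gam <= t)%N].

From HB Require Import structures.
From mathcomp Require Import all_boot all_order all_algebra.
From mathcomp Require Import reals sequences exp lra zify.
Import Order.TTheory GRing.Theory Num.Theory.
Local Open Scope ring_scope.
Set Implicit Arguments. Unset Strict Implicit. Unset Printing Implicit Defensive.

(* Because every channel satisfies P_gam(0) > 1/2, the Walsh-Fourier
   transform of each channel distribution is positive, and the transform of the
   total distribution is the product of these.  Its logarithm is thus a sum over
   gam of functions depending only on the coordinates in gam, so its Fourier
   spectrum lies on vectors of Pauli weight at most t.  The syndrome statistics
   determine the transform on the range of the transposed syndrome map, and a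
   function with spectrum on weight-<=t vectors that vanishes there is zero,
   because the syndrome map is injective on such vectors when 2t < d_p.  Applied
   to the difference of the two log-transforms this yields P = P'. *)

Lemma F2_cases (a : 'F_2) : a = 0 \/ a = 1.
Proof. by case: a => [[|[|//]]] ? /=; [left|right]; apply/val_inj. Qed.

Lemma F2_neq0 (a : 'F_2) : a != 0 -> a = 1.
Proof. by case: (F2_cases a) => ->. Qed.

Section BinaryVectors.
Variable K : nat.
Implicit Types u v w : bvec K.

Lemma bvec_addxx v : v + v = 0.
Proof. by apply/rowP => j; rewrite !mxE addrr_pchar2 // pchar_Fp. Qed.

Lemma bvec_oppr v : - v = v.
Proof. by apply/esym/eqP; rewrite -addr_eq0 bvec_addxx. Qed.

Lemma bvec_add_eq0 u v : (u + v == 0) = (u == v).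
Proof. by rewrite -{1}[v]bvec_oppr subr_eq0. Qed.

Lemma bdotE u v : bdot u v = \sum_j u 0 j * v 0 j.
Proof. by rewrite /bdot !mxE; apply: eq_bigr => j _; rewrite mxE. Qed.

Lemma bdotC u v : bdot u v = bdot v u.
Proof. by rewrite !bdotE; apply: eq_bigr => j _; rewrite mulrC. Qed.

Lemma bdot0r u : bdot u 0 = 0.
Proof. by rewrite bdotE big1 // => j _; rewrite mxE mulr0. Qed.

Lemma bdotDr u v w : bdot u (v + w) = bdot u v + bdot u w.
Proof. by rewrite !bdotE -big_split; apply: eq_bigr => j _; rewrite mxE mulrDr. Qed.

Lemma bdotDl u v w : bdot (v + w) u = bdot v u + bdot w u.
Proof. by rewrite !(bdotC _ u) bdotDr. Qed.

Lemma bdot_sumr (I : Type) (r : seq I) (P : pred I) (F : I -> bvec K) u :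
  bdot u (\sum_(i <- r | P i) F i) = \sum_(i <- r | P i) bdot u (F i).
Proof. exact: (big_morph _ (bdotDr u) (bdot0r u)). Qed.

Lemma bdot_deltar w j : bdot w (delta_mx 0 j) = w 0 j.
Proof.
rewrite bdotE (bigD1 j) //= big1 => [|i /negbTE ij]; rewrite mxE.
  by rewrite !eqxx mulr1 addr0.
by rewrite ij andbF mulr0.
Qed.

Lemma bdot_mulmx_tr m (M : 'M['F_2]_(K, m)) (s : bvec m) u :
  bdot (s *m M^T) u = bdot s (u *m M).
Proof. by rewrite /bdot trmx_mul mulmxA. Qed.

End BinaryVectors.

Lemma sum_eq0_antiperiodic (R : numDomainType) (V : finZmodType) (d : V)
    (F : V -> R) :
  (forall u, F (d + u) = - F u) -> \sum_u F u = 0.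
Proof.
move=> antiF; set S := \sum_u F u.
have : S = - S.
  by rewrite {1}/S (reindex_inj (addrI d)) /= -sumrN; apply: eq_bigr.
by move/eqP; rewrite -addr_eq0 -mulr2n mulrn_eq0 /= => /eqP.
Qed.

Section Fourier.
Variable R : numDomainType.

Definition chi (b : 'F_2) : R := if b == 0 then 1 else -1.

Lemma chi1D b : chi (1 + b) = - chi b.
Proof. by case: (F2_cases b) => ->; rewrite /chi /= ?opprK. Qed.

Lemma chiD a b : chi (a + b) = chi a * chi b.
Proof. by case: (F2_cases a) => ->; rewrite ?add0r ?mul1r // chi1D mulN1r. Qed.

Lemma chi_sum (I : Type) (r : seq I) (P : pred I) (F : I -> 'F_2) :
  chi (\sum_(i <- r | P i) F i) = \prod_(i <- r | P i) chi (F i).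
Proof. exact: (big_morph chi chiD). Qed.

Lemma sum_chi_bdot K (v : bvec K) :
  \sum_u chi (bdot u v) = if v == 0 then (2 ^ K)%:R else 0.
Proof.
have [->|nz_v] := eqVneq v 0.
  under eq_bigr do rewrite bdot0r /chi eqxx.
  by rewrite sumr_const card_mx mul1n card_Fp.
have [j vj] : exists j, v 0 j != 0.
  apply/existsP; apply: contraR nz_v => /existsPn v0.
  by apply/eqP/rowP => j; rewrite mxE; apply/eqP/negbNE.
apply: (@sum_eq0_antiperiodic _ _ (delta_mx 0 j)) => u.
by rewrite bdotDl bdotC bdot_deltar (F2_neq0 vj) chi1D.
Qed.

Definition fourier K (h : bvec K -> R) (u : bvec K) : R :=
  \sum_e h e * chi (bdot u e).

Section FixedDimension.
Variable K : nat.
Implicit Types (u v w : bvec K) (h : bvec K -> R).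

Lemma fourier_inversion h x :
  \sum_w fourier h w * chi (bdot w x) = (2 ^ K)%:R * h x.
Proof.
under eq_bigr do rewrite mulr_suml.
rewrite exchange_big /=.
under eq_bigr => u _.
  under eq_bigr do rewrite -mulrA -chiD -bdotDr.
  rewrite -mulr_sumr sum_chi_bdot bvec_add_eq0.
  over.
rewrite (bigD1 x) //= eqxx big1 => [|u /negbTE ->]; last by rewrite mulr0.
by rewrite addr0 mulrC.
Qed.

Lemma fourier_inj h h' : fourier h =1 fourier h' -> h =1 h'.
Proof.
move=> eq_hat x.
apply: (@mulfI _ (2 ^ K)%:R); first by rewrite pnatr_eq0 expn_eq0.
by rewrite -!fourier_inversion; apply: eq_bigr => w _; rewrite eq_hat.
Qed.

Lemma fourier_sum (I : finType) (P : pred I) (F : I -> bvec K -> R) w :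
  fourier (fun u => \sum_(i | P i) F i u) w = \sum_(i | P i) fourier (F i) w.
Proof.
by rewrite /fourier exchange_big; apply: eq_bigr => e _; rewrite mulr_suml.
Qed.

Lemma fourier_local (gam : {set 'I_K}) h u u' :
  (forall e, h e != 0 -> supp e \subset gam) ->
  {in gam, forall i, u 0 i = u' 0 i} -> fourier h u = fourier h u'.
Proof.
move=> supp_h eq_uu'; apply: eq_bigr => e _.
have [->|/supp_h/subsetP gam_e] := eqVneq (h e) 0; first by rewrite !mul0r.
congr (_ * chi _); rewrite !bdotE; apply: eq_bigr => j _.
have [->|ej] := eqVneq (e 0 j) 0; first by rewrite !mulr0.
by rewrite eq_uu' // gam_e // inE.
Qed.

Lemma fourier_eq0_outside (gam : {set 'I_K}) h w j :
  (forall u u', {in gam, forall i, u 0 i = u' 0 i} -> h u = h u') ->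
  w 0 j != 0 -> j \notin gam -> fourier h w = 0.
Proof.
move=> local_h wj j_gam; apply: (@sum_eq0_antiperiodic _ _ (delta_mx 0 j)) => u.
rewrite bdotDr bdot_deltar (F2_neq0 wj) chi1D mulrN; congr (- (_ * _)).
apply: local_h => i i_gam; rewrite !mxE.
rewrite (_ : i == j = false) ?andbF ?add0r //.
by apply: contraNF j_gam => /eqP <-.
Qed.

Lemma fourier_sum_local_eq0 (Gam : {set {set 'I_K}})
    (h : {set 'I_K} -> bvec K -> R) w :
  (forall gam, gam \in Gam ->
     forall u u', {in gam, forall i, u 0 i = u' 0 i} -> h gam u = h gam u') ->
  (forall gam, gam \in Gam -> ~~ (supp w \subset gam)) ->
  fourier (fun u => \sum_(gam in Gam) h gam u) w = 0.
Proof.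
move=> local_h w_out; rewrite fourier_sum; apply: big1 => gam gam_Gam.
have /subsetPn[j] := w_out gam gam_Gam; rewrite inE => wj j_gam.
exact: fourier_eq0_outside (local_h gam gam_Gam) wj j_gam.
Qed.

End FixedDimension.

Section Adjoint.
Variables (K m : nat) (S : bvec K -> bvec m) (S_adj : bvec m -> bvec K).
Hypothesis bdot_adj : forall s e, bdot (S_adj s) e = bdot s (S e).

Lemma fourier_adj h s :
  fourier h (S_adj s) = fourier (fun sg => \sum_(e | S e == sg) h e) s.
Proof.
rewrite /fourier (partition_big S predT) //=; apply: eq_bigr => sg _.
by rewrite mulr_suml; apply: eq_bigr => e /eqP <-; rewrite bdot_adj.
Qed.

Lemma sum_chi_adj w w' :
  \sum_s chi (bdot w (S_adj s)) * chi (bdot w' (S_adj s)) =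
  if S w == S w' then (2 ^ m)%:R else 0.
Proof.
rewrite -bvec_add_eq0 -sum_chi_bdot; apply: eq_bigr => s _.
by rewrite -chiD !(bdotC _ (S_adj s)) !bdot_adj -bdotDr.
Qed.

Lemma fourier_spectrum_eq0 (T : pred (bvec K)) D :
  {in T &, injective S} -> (forall w, w \notin T -> fourier D w = 0) ->
  (forall s, D (S_adj s) = 0) -> D =1 (fun _ => 0).
Proof.
move=> S_inj spectrumT D_adj.
suff hatD0 w : fourier D w = 0.
  by apply: fourier_inj => w; rewrite hatD0 /fourier big1 // => e _; rewrite mul0r.
have [w_T|] := boolP (w \in T); last exact: spectrumT.
(* Expanding D by Fourier inversion, the characters of the range of S_adj
   isolate the coefficient at w, since S separates the points of T. *)
have : \sum_s (2 ^ K)%:R * D (S_adj s) * chi (bdot w (S_adj s)) = 0.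
  by apply: big1 => s _; rewrite D_adj mulr0 mul0r.
under eq_bigr do rewrite -fourier_inversion mulr_suml.
rewrite exchange_big /=.
under eq_bigr => w' _.
  rewrite (eq_bigr _ (fun s _ => esym (mulrA _ _ _))) -mulr_sumr sum_chi_adj.
  over.
rewrite (bigD1 w) //= eqxx big1 => [|w' w'w]; last first.
  have [w'_T|/spectrumT->] := boolP (w' \in T); last by rewrite mul0r.
  case: eqP => [/S_inj|]; rewrite ?mulr0 // => /(_ w'_T w_T) /eqP.
  by rewrite (negbTE w'w).
by rewrite addr0 => /eqP; rewrite mulf_eq0 pnatr_eq0 expn_eq0 orbF => /eqP.
Qed.

End Adjoint.
End Fourier.

Lemma fourier_pos (R : realFieldType) K (p : bvec K -> R) u :
  (forall e, 0 <= p e) -> \sum_e p e = 1 -> 1 / 2 < p 0 -> 0 < fourier p u.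
Proof.
move=> p_ge0 p_sum1 p0_gt; rewrite /fourier (bigD1 0) //= bdot0r /chi eqxx mulr1.
have rest : \sum_(e | e != 0) p e = 1 - p 0.
  by apply/eqP; rewrite eq_sym subr_eq -p_sum1 [X in X == _](bigD1 0) //= addrC.
have : - (1 - p 0) <= \sum_(e | e != 0) p e * chi R (bdot u e).
  rewrite -rest -sumrN; apply: ler_sum => e _.
  have := p_ge0 e.
  by case: (F2_cases (bdot u e)) => ->; rewrite /chi /= ?mulr1 ?mulrN1; lra.
lra.
Qed.

Section TotalDistribution.
Variables (R : realType) (N : nat) (Gam : {set {set 'I_N}}).
Variable P : {set 'I_N} -> {ffun bvec N -> R}.

Lemma fourier_total_dist u :
  fourier (total_dist Gam P) u = \prod_(gam in Gam) fourier (P gam) u.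
Proof.
pose onGam (f : {ffun {set 'I_N} -> bvec N}) :=
  [forall gam, (gam \notin Gam) ==> (f gam == 0)].
transitivity (\sum_(f | onGam f)
    \prod_(gam in Gam) (P gam (f gam) * chi R (bdot u (f gam)))).
  rewrite [RHS](partition_big (fun f : {ffun _} => \sum_(gam in Gam) f gam)
    predT) //=.
  apply: eq_bigr => x _; rewrite mulr_suml; apply: eq_bigr => f /andP[_ /eqP <-].
  by rewrite bdot_sumr chi_sum big_split.
pose Q gam : pred (bvec N) := if gam \in Gam then predT else pred1 0.
pose F gam e := if gam \in Gam then P gam e * chi R (bdot u e) else 1.
transitivity (\prod_gam \sum_(e | Q gam e) F gam e); last first.
  rewrite [RHS]big_mkcond; apply: eq_bigr => gam _; rewrite /Q /F.
  by case: ifP => _ //; rewrite big_pred1_eq.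
rewrite bigA_distr_big_dep; apply: eq_big => [f|f _].
  apply/forallP/familyP => onGam_f gam; move: (onGam_f gam);
    by rewrite /Q; case: ifP => //= _; rewrite inE.
by rewrite [LHS]big_mkcond; apply: eq_bigr => gam _; rewrite /F.
Qed.

Lemma fourier_total_dist_expR u :
  (forall gam, gam \in Gam -> is_channel_dist gam (P gam) /\ 1 / 2 < P gam 0) ->
  fourier (total_dist Gam P) u = expR (\sum_(gam in Gam) ln (fourier (P gam) u)).
Proof.
move=> chP; rewrite fourier_total_dist expR_sum.
apply: eq_bigr => gam /chP[[P_ge0 [P_sum1 _]] P0_gt]; rewrite lnK //.
exact: fourier_pos.
Qed.

End TotalDistribution.

Section PauliWeight.
Variables n m : nat.
Implicit Types v w : bvec (n + n + m).

Lemma wtP_mono v w :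
  (forall j, v 0 j != 0 -> w 0 j != 0) -> (wtP v <= wtP w)%N.
Proof.
move=> vw; rewrite /wtP /err_d /err_m leq_add //; apply: subset_leq_card;
  apply/subsetP => i; rewrite !inE !mxE.
  by case/orP => /vw ->; rewrite ?orbT.
exact: vw.
Qed.

Lemma wtP_add v w : (wtP (v + w) <= wtP v + wtP w)%N.
Proof.
have nz_add (a b : 'F_2) : a + b != 0 -> (a != 0) || (b != 0).
  by apply: contraR; case/norP => /negPn/eqP -> /negPn/eqP ->; rewrite addr0.
rewrite /wtP /err_d /err_m addnACA leq_add //;
  apply: (leq_trans _ (leq_card_setU _ _)); apply: subset_leq_card;
  apply/subsetP => i; rewrite !inE !mxE.
  by case/orP => /nz_add /orP [] ->; rewrite ?orbT.
by move/nz_add.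
Qed.

Lemma wtP_eq0 w : wtP w = 0%N -> w = 0.
Proof.
rewrite /wtP /err_d /err_m => /eqP; rewrite addn_eq0.
case/andP => /eqP/cards0_eq/setP dat /eqP/cards0_eq/setP meas.
apply/rowP => j; rewrite mxE; apply/eqP; apply: contraT => wj.
case: (split_ordP j) wj => [j1 -> wj|j2 -> wj].
  case: (split_ordP j1) wj => [i -> wi|i -> wi];
    by move: (dat i); rewrite !inE !mxE wi ?orbT.
by move: (meas j2); rewrite !inE mxE wj.
Qed.

Lemma wtP_le_set w (gam : {set 'I_(n + n + m)}) :
  supp w \subset gam -> (wtP w <= wtP_set gam)%N.
Proof.
by move=> /subsetP w_gam; apply: wtP_mono => j wj; rewrite mxE w_gam ?inE.
Qed.

Lemma supp_not_subset_Gamma_t t w gam :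
  (t < wtP w)%N -> gam \in Gamma_t n m t -> ~~ (supp w \subset gam).
Proof. by move=> wt_w; rewrite inE => wt_gam; apply/negP => /wtP_le_set; lia. Qed.

End PauliWeight.

Section Syndrome.
Variables (n l k : nat) (g : 'I_l -> bvec (n + n)) (A : 'M['F_2]_(l, k)).

Lemma syn_add e e' : syn g A (e + e') = syn g A e + syn g A e'.
Proof.
apply/rowP => i; rewrite !mxE /err_d /err_m /pbar !linearD /= -add_row_mx bdotDr.
by rewrite addrACA.
Qed.

Lemma syn0 : syn g A 0 = 0.
Proof. by apply: (@addrI _ (syn g A 0)); rewrite -syn_add !addr0. Qed.

Definition synmx : 'M['F_2]_(n + n + (l + k), l + k) :=
  \matrix_i syn g A (delta_mx 0 i).

Lemma syn_mulmx e : syn g A e = e *m synmx.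
Proof.
rewrite mulmx_sum_row {1}[e]row_sum_delta.
rewrite (big_morph _ syn_add syn0); apply: eq_bigr => i _; rewrite rowK.
by case: (F2_cases (e 0 i)) => ->; rewrite ?scale0r ?syn0 ?scale1r.
Qed.

Definition syn_adj (s : bvec (l + k)) : bvec (n + n + (l + k)) := s *m synmx^T.

Lemma bdot_syn_adj s e : bdot (syn_adj s) e = bdot s (syn g A e).
Proof. by rewrite bdot_mulmx_tr syn_mulmx. Qed.

Lemma syn_inj_low_weight dp t :
  is_pure_distance g A dp -> (t <= (dp - 1)./2)%N ->
  {in [pred w | wtP w <= t]%N &, injective (syn g A)}.
Proof.
move=> [[e0 [nz_e0 [_ wt_e0]]] dp_min] t_le w w'.
rewrite !inE => wt_w wt_w' eq_syn.
have dp_gt0 : (0 < dp)%N.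
  by rewrite -wt_e0 lt0n; apply: contra nz_e0 => /eqP/wtP_eq0 ->.
have syn_sum0 : syn g A (w + w') = 0 by rewrite syn_add eq_syn bvec_addxx.
apply/eqP; rewrite -bvec_add_eq0; apply: contraT => nz_sum.
have := dp_min _ nz_sum syn_sum0; have := wtP_add w w'; lia.
Qed.

End Syndrome.

Unset Implicit Arguments. Set Strict Implicit. Set Printing Implicit Defensive.

Theorem corollary11 (R : realType) (n l k : nat)
  (g : 'I_l -> bvec (n + n)) (A : 'M['F_2]_(l, k))
  (hcomm : forall i j : 'I_l, bdot (pbar (g i)) (g j) = 0)
  (dp t : nat) (hdp : is_pure_distance g A dp)
  (ht : (t <= (dp - 1)./2)%N)
  (P P' : {set 'I_(n + n + (l + k))} -> {ffun bvec (n + n + (l + k)) -> R})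
  (hP : forall gam, gam \in Gamma_t n (l + k) t ->
          is_channel_dist gam (P gam) /\ 1 / 2 < P gam 0)
  (hP' : forall gam, gam \in Gamma_t n (l + k) t ->
          is_channel_dist gam (P' gam) /\ 1 / 2 < P' gam 0)
  (hsyn : forall s, syn_dist g A (Gamma_t n (l + k) t) P s =
                    syn_dist g A (Gamma_t n (l + k) t) P' s) :
  forall x, total_dist (Gamma_t n (l + k) t) P x = total_dist (Gamma_t n (l + k) t) P' x.
Proof.
apply: fourier_inj => u; rewrite !fourier_total_dist_expR //; congr expR.
apply/eqP; rewrite -subr_eq0 -sumrB; apply/eqP; move: u.
apply: (fourier_spectrum_eq0 (bdot_syn_adj g A) (syn_inj_low_weight hdp ht)).
- move=> w; rewrite inE -ltnNge => wt_w.
  apply: fourier_sum_local_eq0 => [gam gam_Gam u u' eq_uu'|gam gam_Gam].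
    have [[_ [_ suppP]] _] := hP gam gam_Gam.
    have [[_ [_ suppP']] _] := hP' gam gam_Gam.
    by rewrite (fourier_local suppP eq_uu') (fourier_local suppP' eq_uu').
  exact: supp_not_subset_Gamma_t wt_w gam_Gam.
- move=> s; rewrite sumrB; apply/eqP; rewrite subr_eq0; apply/eqP; apply: expR_inj.
  rewrite -!fourier_total_dist_expR // !(fourier_adj (bdot_syn_adj g A)).
  by apply: eq_bigr => sg _; move: (hsyn sg); rewrite /syn_dist => ->.
Qed.
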